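(* The basic coalgebra of a symmetric coalgebra is symmetric.
   Context: A coalgebra $C$ over a field $k$ is symmetric if there is an injective homomorphism of $C^*$-bimodules $C\to C^*$, where $C^*=\mathrm{Hom}_k(C,k)$ is the dual algebra acting on $C$ by the hit actions $f\rightharpoonup c=\sum c_{(1)}f(c_{(2)})$ and $c\leftharpoonup f=\sum f(c_{(1)})c_{(2)}$. The basic coalgebra of $C$ is $B=e\rightharpoonup C\leftharpoonup e$, where $e\in C^*$ is an idempotent such that the right comodule $C\leftharpoonup e$ is a direct sum of indecomposable injective right $C$-comodules containing each isomorphism class exactly once; its comultiplication is $x\mapsto\sum (e\rightharpoonup x_{(1)}\leftharpoonup e)\otimes(e\rightharpoonup x_{(2)}\leftharpoonup e)$ and its counit is the restriction of $\varepsilon$ (it is the coendomorphism coalgebra of $C\leftharpoonup e$). *)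

From Stdlib Require List.
From mathcomp Require Import all_boot all_algebra.
Set Implicit Arguments. Unset Strict Implicit. Unset Printing Implicit Defensive.
Import GRing.Theory.
Local Open Scope ring_scope.

(* Conventions:
   - An element of a tensor product M (x) N is represented by a finite list of
     pairs s = [(m_1,n_1);...], standing for sum_i m_i (x) n_i.  Two such lists
     represent the same tensor iff they agree on all f (x) g with f in M^*,
     g in N^* (this is the equality of M (x) N over a field).
   - A "space" may be a subspace S of an lmodType V given by a predicate;
     functionals on S are functions V -> k that are linear on S (their values
     outside S are irrelevant). *)

Section Coalg.
Variable k : fieldType.

Definition lin_on (V : lmodType k) (S : V -> Prop) (f : V -> k) :=
  forall a x y, S x -> S y -> f (a *: x + y) = a * f x + f y.

Definition lin (V : lmodType k) (f : V -> k) := lin_on (fun _ => True) f.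

Definition teq (M N : lmodType k) (s t : seq (M * N)) :=
  forall (f : M -> k) (g : N -> k), lin f -> lin g ->
    \sum_(p <- s) f p.1 * g p.2 = \sum_(p <- t) f p.1 * g p.2.

Definition is_coalgebra (C : lmodType k) (D : C -> seq (C * C)) (eps : C -> k) :=
  [/\ (forall a x y, teq (D (a *: x + y))
                        ([seq (a *: p.1, p.2) | p <- D x] ++ D y)),
      (forall c f g h, lin f -> lin g -> lin h ->
         \sum_(p <- D c) \sum_(q <- D p.1) f q.1 * g q.2 * h p.2
         = \sum_(p <- D c) \sum_(q <- D p.2) f p.1 * g q.1 * h q.2),
      lin eps,
      (forall c, \sum_(p <- D c) eps p.1 *: p.2 = c) &
      (forall c, \sum_(p <- D c) eps p.2 *: p.1 = c)].

(* hit actions: f -> c = sum c1 f(c2),  c <- f = sum f(c1) c2 *)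
Definition hitl (C : lmodType k) (D : C -> seq (C * C)) (f : C -> k) (c : C) : C :=
  \sum_(p <- D c) f p.2 *: p.1.
Definition hitr (C : lmodType k) (D : C -> seq (C * C)) (c : C) (f : C -> k) : C :=
  \sum_(p <- D c) f p.1 *: p.2.

(* A coalgebra structure (given by D) on the subspace S of V is symmetric:
   there is an injective S^*-bimodule map phi : S -> S^*.
   phi x y is the value of phi(x) at y; the convolution product of S^*
   is (f*g)(y) = sum f(y1) g(y2). *)
Definition symmetric_on (V : lmodType k) (S : V -> Prop) (D : V -> seq (V * V)) :=
  exists phi : V -> V -> k,
  [/\ (forall x, S x -> lin_on S (phi x)),
      (forall a x y z, S x -> S y -> S z ->
          phi (a *: x + y) z = a * phi x z + phi y z),
      (forall x x', S x -> S x' -> (forall y, S y -> phi x y = phi x' y) -> x = x'),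
      (forall f x y, lin_on S f -> S x -> S y ->
          phi (hitl D f x) y = \sum_(p <- D y) f p.1 * phi x p.2) &
      (forall f x y, lin_on S f -> S x -> S y ->
          phi (hitr D x f) y = \sum_(p <- D y) phi x p.1 * f p.2)].

Definition symmetric_coalg (C : lmodType k) (D : C -> seq (C * C)) :=
  symmetric_on (fun _ : C => True) D.

Section Comod.
Variables (C : lmodType k) (D : C -> seq (C * C)) (eps : C -> k).

Definition is_rcomodule (M : lmodType k) (rho : M -> seq (M * C)) :=
  [/\ (forall a x y, teq (rho (a *: x + y))
                        ([seq (a *: p.1, p.2) | p <- rho x] ++ rho y)),
      (forall m f g h, lin f -> lin g -> lin h ->
         \sum_(p <- rho m) \sum_(q <- rho p.1) f q.1 * g q.2 * h p.2
         = \sum_(p <- rho m) \sum_(q <- D p.2) f p.1 * g q.1 * h q.2) &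
      (forall m, \sum_(p <- rho m) eps p.2 *: p.1 = m)].

Definition comod_hom (M N : lmodType k) (rM : M -> seq (M * C)) (rN : N -> seq (N * C))
  (u : M -> N) :=
  (forall a x y, u (a *: x + y) = a *: u x + u y) /\
  (forall m, teq (rN (u m)) [seq (u p.1, p.2) | p <- rM m]).

Definition subcomod (M : lmodType k) (rho : M -> seq (M * C)) (Q : M -> Prop) :=
  [/\ Q 0, (forall a x y, Q x -> Q y -> Q (a *: x + y)) &
      (forall m, Q m -> exists s, List.Forall (fun p => Q p.1) s /\ teq s (rho m))].

Definition injective_sub (M : lmodType k) (rho : M -> seq (M * C)) (Q : M -> Prop) :=
  forall (X Y : lmodType k) (rX : X -> seq (X * C)) (rY : Y -> seq (Y * C)),
    is_rcomodule rX -> is_rcomodule rY ->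
    forall i : X -> Y, comod_hom rX rY i -> injective i ->
    forall u : X -> M, comod_hom rX rho u -> (forall x, Q (u x)) ->
    exists v : Y -> M, [/\ comod_hom rY rho v, (forall y, Q (v y)) &
                           forall x, v (i x) = u x].

Definition indecomposable_sub (M : lmodType k) (rho : M -> seq (M * C)) (Q : M -> Prop) :=
  (exists m, Q m /\ m <> 0) /\
  forall Q1 Q2, subcomod rho Q1 -> subcomod rho Q2 ->
    (forall m, Q m <-> exists m1 m2, [/\ Q1 m1, Q2 m2 & m = m1 + m2]) ->
    (forall m, Q1 m -> Q2 m -> m = 0) ->
    (forall m, Q1 m -> m = 0) \/ (forall m, Q2 m -> m = 0).

Definition iso_sub (X : lmodType k) (rX : X -> seq (X * C))
  (M : lmodType k) (rho : M -> seq (M * C)) (Q : M -> Prop) :=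
  exists u : X -> M, [/\ comod_hom rX rho u, injective u,
     (forall x, Q (u x)) & forall m, Q m -> exists x, u x = m].

(* e in C^* is an idempotent such that the right comodule C <- e is a direct
   sum of indecomposable injective right C-comodules containing each
   isomorphism class exactly once *)
Definition basic_idempotent (e : C -> k) :=
  [/\ lin e,
      (forall c, \sum_(p <- D c) e p.1 * e p.2 = e c) &
      exists (I : Type) (Q : I -> C -> Prop),
      [/\ (forall i, subcomod D (Q i) /\
                      forall x, Q i x -> exists c, x = hitr D c e),
          (forall x, (exists c, x = hitr D c e) ->
             exists s : seq (I * C),
               List.Forall (fun p => Q p.1 p.2) s /\ x = \sum_(p <- s) p.2),
          (forall i x (s : seq (I * C)), Q i x ->
             List.Forall (fun p => p.1 <> i /\ Q p.1 p.2) s ->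
             x = \sum_(p <- s) p.2 -> x = 0),
          (forall i, indecomposable_sub D (Q i) /\ injective_sub D (Q i)) &
          (forall (X : lmodType k) (rX : X -> seq (X * C)), is_rcomodule rX ->
             indecomposable_sub rX (fun _ => True) ->
             injective_sub rX (fun _ => True) ->
             exists i, iso_sub rX D (Q i) /\
                       forall j, iso_sub rX D (Q j) -> j = i)]].

(* the basic coalgebra B = e -> C <- e, as a subspace of C, with
   comultiplication x |-> sum (e -> x1 <- e) (x) (e -> x2 <- e) *)
Definition basic_sub (e : C -> k) (x : C) : Prop :=
  exists c, x = hitl D e (hitr D c e).
Definition basic_comul (e : C -> k) (x : C) : seq (C * C) :=
  [seq (hitl D e (hitr D p.1 e), hitl D e (hitr D p.2 e)) | p <- D x].

End Comod.
End Coalg.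

(* The symmetry map phi : C -> C^* of C also works for B.  Being a bimodule
   map, phi sends e -> c <- e to the corner e * phi(c) * e of C^*, and a
   functional in that corner is determined by its values on B, which gives
   injectivity on B.  A functional f on B extends to C as f o bproj, where
   bproj c = e -> c <- e; the hit actions of B are the images under bproj of
   those of f o bproj on C, and f o bproj lies in the corner as well, so the
   bimodule identities of phi on B reduce to those on C. *)
From mathcomp Require Import all_boot all_algebra.
From Stdlib Require Import FunctionalExtensionality.
Set Implicit Arguments. Unset Strict Implicit. Unset Printing Implicit Defensive.
Import GRing.Theory.
Local Open Scope ring_scope.

Section LinearFunctional.
Variables (k : fieldType) (V : lmodType k) (f : V -> k).
Hypothesis f_lin : lin f.

Lemma lin0 : f 0 = 0.
Proof.
have := @f_lin 1 0 0 I I; rewrite scale1r addr0 mul1r.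
by move/(congr1 (fun z => z - f 0)); rewrite subrr addrK.
Qed.

Lemma linD x y : f (x + y) = f x + f y.
Proof. by have := @f_lin 1 x y I I; rewrite scale1r mul1r. Qed.

Lemma linZ a x : f (a *: x) = a * f x.
Proof. by have := @f_lin a x 0 I I; rewrite addr0 lin0 addr0. Qed.

Lemma lin_sum (I : Type) (s : seq I) (F : I -> V) :
  f (\sum_(i <- s) F i) = \sum_(i <- s) f (F i).
Proof.
elim: s => [|x s IH]; first by rewrite !big_nil lin0.
by rewrite !big_cons linD IH.
Qed.

End LinearFunctional.

Section Coalgebra.
Variables (k : fieldType) (C : lmodType k) (D : C -> seq (C * C)).

Definition conv (f g : C -> k) (c : C) : k := \sum_(p <- D c) f p.1 * g p.2.

Lemma lin_hitl f g x : lin g -> g (hitl D f x) = conv g f x.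
Proof.
move=> g_lin; rewrite /hitl /conv lin_sum //; apply: eq_bigr => p _.
by rewrite linZ // mulrC.
Qed.

Lemma lin_hitr f g x : lin g -> g (hitr D x f) = conv f g x.
Proof.
move=> g_lin; rewrite /hitr /conv lin_sum //; apply: eq_bigr => p _.
by rewrite linZ.
Qed.

Lemma conv_combl a g g1 g2 h c : (forall z, g z = a * g1 z + g2 z) ->
  conv g h c = a * conv g1 h c + conv g2 h c.
Proof.
move=> gE; rewrite /conv mulr_sumr -big_split /=; apply: eq_bigr => p _.
by rewrite gE mulrDl mulrA.
Qed.

Lemma conv_combr a g g1 g2 h c : (forall z, g z = a * g1 z + g2 z) ->
  conv h g c = a * conv h g1 c + conv h g2 c.
Proof.
move=> gE; rewrite /conv mulr_sumr -big_split /=; apply: eq_bigr => p _.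
by rewrite gE mulrDr mulrCA mulrA.
Qed.

Variable eps : C -> k.
Hypothesis coalgD : is_coalgebra D eps.

Lemma conv_lin f g : lin f -> lin g -> lin (conv f g).
Proof.
case: coalgD => D_lin _ _ _ _ f_lin g_lin a x y _ _.
rewrite /conv (D_lin a x y f g f_lin g_lin) big_cat big_map /= mulr_sumr.
by congr (_ + _); apply: eq_bigr => p _; rewrite linZ // mulrA.
Qed.

Lemma convA f g h : lin f -> lin g -> lin h ->
  conv (conv f g) h = conv f (conv g h).
Proof.
case: coalgD => _ D_coassoc _ _ _ f_lin g_lin h_lin.
apply: functional_extensionality => c; rewrite /conv.
under eq_bigr do rewrite mulr_suml.
rewrite D_coassoc //; apply: eq_bigr => p _; rewrite mulr_sumr.
by apply: eq_bigr => q _; rewrite mulrA.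
Qed.

Variable phi : C -> C -> k.
Hypotheses (phi_lin : forall x, lin (phi x))
  (phiD : forall a x y z, phi (a *: x + y) z = a * phi x z + phi y z)
  (phi_inj : injective phi)
  (phi_hitl : forall f x, lin f -> phi (hitl D f x) = conv f (phi x))
  (phi_hitr : forall f x, lin f -> phi (hitr D x f) = conv (phi x) f).

Local Hint Resolve phi_lin conv_lin : core.

(* The comultiplication is only known up to equality of tensors, so linearity
   of the hit actions is read off through the injective map phi. *)
Lemma hitlD f a x y : lin f ->
  hitl D f (a *: x + y) = a *: hitl D f x + hitl D f y.
Proof.
move=> f_lin; apply: phi_inj; apply: functional_extensionality => z.
by rewrite phiD !phi_hitl //; apply: conv_combr.
Qed.

Lemma hitrD f a x y : lin f ->
  hitr D (a *: x + y) f = a *: hitr D x f + hitr D y f.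
Proof.
move=> f_lin; apply: phi_inj; apply: functional_extensionality => z.
by rewrite phiD !phi_hitr //; apply: conv_combl.
Qed.

Variable e : C -> k.
Hypotheses (e_lin : lin e) (e_idem : conv e e = e).

Local Hint Resolve e_lin : core.

Definition corner (g : C -> k) : C -> k := conv e (conv g e).

Lemma corner_idl g : lin g -> conv e (corner g) = corner g.
Proof. by move=> g_lin; rewrite /corner -convA ?e_idem; auto. Qed.

Lemma corner_idr g : lin g -> conv (corner g) e = corner g.
Proof. by move=> g_lin; rewrite /corner !convA ?e_idem; auto. Qed.

Lemma corner_conv F G : lin F -> lin G ->
  conv e F = F -> conv G e = G -> corner (conv F G) = conv F G.
Proof.
move=> F_lin G_lin eF Ge.
by rewrite /corner !convA ?Ge -?convA ?eF; auto.
Qed.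

Definition bproj (c : C) : C := hitl D e (hitr D c e).

Lemma lin_bproj g z : lin g -> g (bproj z) = corner g z.
Proof. by move=> g_lin; rewrite /bproj lin_hitl ?lin_hitr; auto. Qed.

Lemma phi_bproj c : phi (bproj c) = corner (phi c).
Proof. by rewrite /bproj phi_hitl ?phi_hitr. Qed.

Lemma bprojD a x y : bproj (a *: x + y) = a *: bproj x + bproj y.
Proof. by rewrite /bproj hitrD ?hitlD. Qed.

Lemma bproj_sum (s : seq (C * C)) (F : C * C -> k) (G : C * C -> C) :
  bproj (\sum_(p <- s) F p *: G p) = \sum_(p <- s) F p *: bproj (G p).
Proof.
have bproj0 : bproj 0 = 0.
  have := bprojD 1 0 0; rewrite !scale1r addr0.
  by move/(congr1 (fun v => v - bproj 0)); rewrite subrr addrK.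
elim: s => [|q s IH]; first by rewrite !big_nil.
by rewrite !big_cons bprojD IH.
Qed.

Lemma bprojK c : bproj (bproj c) = bproj c.
Proof.
apply: phi_inj; rewrite !phi_bproj.
by rewrite -[in RHS]corner_idl // -[in RHS]corner_idr.
Qed.

Lemma phi_bproj_bproj c z : phi (bproj c) (bproj z) = phi (bproj c) z.
Proof.
by rewrite lin_bproj // phi_bproj /corner corner_idr // corner_idl.
Qed.

Lemma phi_basic_inj x x' : basic_sub D e x -> basic_sub D e x' ->
  (forall y, basic_sub D e y -> phi x y = phi x' y) -> x = x'.
Proof.
move=> [c ->] [c' ->] eq_phi; apply: phi_inj; apply: functional_extensionality => z.
by rewrite -phi_bproj_bproj -[RHS]phi_bproj_bproj eq_phi //; exists z.
Qed.

Section BasicFunctional.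
Variable f : C -> k.
Hypothesis f_lin : lin_on (basic_sub D e) f.

Lemma lin_comp_bproj : lin (f \o bproj).
Proof. by move=> a x y _ _ /=; rewrite bprojD f_lin //; [exists x | exists y]. Qed.

Local Hint Resolve lin_comp_bproj : core.

Lemma corner_comp_bproj : corner (f \o bproj) = f \o bproj.
Proof.
by apply: functional_extensionality => z; rewrite -lin_bproj //= bprojK.
Qed.

Lemma hitl_basic x : hitl (basic_comul D e) f x = bproj (hitl D (f \o bproj) x).
Proof. by rewrite /hitl big_map bproj_sum. Qed.

Lemma hitr_basic x : hitr (basic_comul D e) x f = bproj (hitr D x (f \o bproj)).
Proof. by rewrite /hitr big_map bproj_sum. Qed.

Lemma phi_hitl_basic c y :
  phi (hitl (basic_comul D e) f (bproj c)) y
  = \sum_(p <- basic_comul D e y) f p.1 * phi (bproj c) p.2.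
Proof.
rewrite hitl_basic phi_bproj phi_hitl // corner_conv //.
- by rewrite big_map; apply: eq_bigr => p _; rewrite phi_bproj_bproj.
- by rewrite -corner_comp_bproj corner_idl.
- by rewrite phi_bproj corner_idr.
Qed.

Lemma phi_hitr_basic c y :
  phi (hitr (basic_comul D e) (bproj c) f) y
  = \sum_(p <- basic_comul D e y) phi (bproj c) p.1 * f p.2.
Proof.
rewrite hitr_basic phi_bproj phi_hitr // corner_conv //.
- by rewrite big_map; apply: eq_bigr => p _; rewrite phi_bproj_bproj.
- by rewrite phi_bproj corner_idl.
- by rewrite -corner_comp_bproj corner_idr.
Qed.

End BasicFunctional.

Lemma basic_symmetric : symmetric_on (basic_sub D e) (basic_comul D e).
Proof.
exists phi; split.
- by move=> x _ a y z _ _; apply: phi_lin.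
- by move=> a x y z _ _ _; apply: phiD.
- exact: phi_basic_inj.
- by move=> f x y f_lin [c ->] _; apply: phi_hitl_basic.
- by move=> f x y f_lin [c ->] _; apply: phi_hitr_basic.
Qed.

End Coalgebra.

Theorem lemma2p2p3 (k : fieldType) (C : lmodType k)
  (D : C -> seq (C * C)) (eps : C -> k) (e : C -> k) :
  is_coalgebra D eps ->
  symmetric_coalg D ->
  basic_idempotent D eps e ->
  symmetric_on (basic_sub D e) (basic_comul D e).
Proof.
move=> coalgD [phi [phi_lin phiD phi_inj phi_hitl phi_hitr]] [e_lin e_idem _].
apply: (basic_symmetric coalgD (phi := phi)) => //.
- by move=> x; apply: phi_lin.
- by move=> a x y z; apply: phiD.
- by move=> x x' eq_phi; apply: phi_inj => // y _; rewrite eq_phi.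
- by move=> f x f_lin; apply: functional_extensionality => y; apply: phi_hitl.
- by move=> f x f_lin; apply: functional_extensionality => y; apply: phi_hitr.
- by apply: functional_extensionality => c; apply: e_idem.
Qed.
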